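(* Let $h_1,h_2,h_3\in\mathbb R$ with $h_1^2\geq h_2^2\geq h_3^2$ and $P>0$, and let $\underline{C}_3$ be defined as follows: $\underline{C}_3$ is the maximum, over $\alpha_{12},\alpha_{23},\alpha_{31}\in[0,1]$ with $\alpha_{12}+\alpha_{23}+\alpha_{31}=1$, of $$2\alpha_{12}\min\Big\{C^+\big(h_2^2P_{21}^*-\tfrac12\big),C(h_2^2P)\Big\}+2\alpha_{23}\min\Big\{C^+\big(h_3^2P_{31}^*-\tfrac12\big),C(h_3^2P)\Big\}+2\alpha_{31}\min\Big\{C^+\big(h_3^2P_{32}^*-\tfrac12\big),C(h_3^2P)\Big\},$$ where $h_2^2P_{21}^*=\min\{\frac{h_1^2P}{\alpha_{12}+\alpha_{31}},\frac{h_2^2P}{\alpha_{12}+\alpha_{23}}\}$, $h_3^2P_{31}^*=\min\{\frac{h_1^2P}{\alpha_{12}+\alpha_{31}},\frac{h_3^2P}{\alpha_{23}+\alpha_{31}}\}$, $h_3^2P_{32}^*=\min\{\frac{h_2^2P}{\alpha_{12}+\alpha_{23}},\frac{h_3^2P}{\alpha_{23}+\alpha_{31}}\}$. Then $$\underline{C}_3\geq 2\min\Big\{C^+\big(h_2^2P-\tfrac12\big),\ C(h_2^2P)\Big\}.$$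
   Context: $C(x)=\frac12\log_2(1+x)$ and $C^+(x)=\max\{0,C(x)\}$. A fraction with zero denominator and positive numerator is interpreted as $+\infty$. *)

From HB Require Import structures.
From mathcomp Require Import all_boot all_order all_algebra.
From mathcomp Require Import all_classical all_reals all_analysis.
Set Implicit Arguments. Unset Strict Implicit. Unset Printing Implicit Defensive.
Import Order.TTheory GRing.Theory Num.Theory.
Local Open Scope ring_scope.
Local Open Scope ereal_scope.

Section Defs.
Variable R : realType.

Definition Cf (x : R) : R := (ln (1 + x) / (2 * ln 2))%R.
Definition Cp (x : R) : R := Num.max 0%R (Cf x).

Definition edivp (a b : R) : \bar R := if b == 0%R then +oo else (a / b)%:E.

(* C^+ extended to \bar R, with C^+(+oo) = +oo (the -oo case never occurs) *)
Definition Cpe (x : \bar R) : \bar R :=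
  match x with
  | r%:E => (Cp r)%:E
  | +oo => +oo
  | -oo => 0
  end.

Definition term (Pst : \bar R) (hP : R) : \bar R :=
  Order.min (Cpe (Pst - (2^-1)%:E)) (Cf hP)%:E.

Definition objective (h1 h2 h3 P a12 a23 a31 : R) : \bar R :=
  let P21 := Order.min (edivp (h1^+2 * P) (a12 + a31)) (edivp (h2^+2 * P) (a12 + a23)) in
  let P31 := Order.min (edivp (h1^+2 * P) (a12 + a31)) (edivp (h3^+2 * P) (a23 + a31)) in
  let P32 := Order.min (edivp (h2^+2 * P) (a12 + a23)) (edivp (h3^+2 * P) (a23 + a31)) in
  (2 * a12)%:E * term P21 (h2^+2 * P)
  + (2 * a23)%:E * term P31 (h3^+2 * P)
  + (2 * a31)%:E * term P32 (h3^+2 * P).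

Definition underC3 (h1 h2 h3 P : R) : \bar R :=
  ereal_sup [set v | exists a12 a23 a31 : R,
    [/\ (0 <= a12 <= 1)%R, (0 <= a23 <= 1)%R, (0 <= a31 <= 1)%R,
        (a12 + a23 + a31 = 1)%R & v = objective h1 h2 h3 P a12 a23 a31]].

End Defs.

From Pilot Require Import Defs.
From HB Require Import structures.
From mathcomp Require Import all_boot all_order all_algebra.
From mathcomp Require Import all_classical all_reals all_analysis.
Import Order.TTheory GRing.Theory Num.Theory.
Local Open Scope ring_scope.

(* Choosing the time-sharing vertex (a12, a23, a31) = (1, 0, 0) already attains
   the bound: there P21* = min(h1^2 P, h2^2 P) = h2^2 P, while the two other
   terms are weighted by 0. *)

Section Objective.
Context {R : realType}.

Lemma edivp1 (x : R) : Defs.edivp x 1 = x%:E.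
Proof. by rewrite /Defs.edivp oner_eq0 divr1. Qed.

Lemma edivp0 (x : R) : Defs.edivp x 0 = +oo%E.
Proof. by rewrite /Defs.edivp eqxx. Qed.

Lemma objective_le_underC3 (h1 h2 h3 P a12 a23 a31 : R) :
  0 <= a12 <= 1 -> 0 <= a23 <= 1 -> 0 <= a31 <= 1 -> a12 + a23 + a31 = 1 ->
  (objective h1 h2 h3 P a12 a23 a31 <= underC3 h1 h2 h3 P)%E.
Proof. by move=> ? ? ? ?; apply: ereal_sup_ubound; exists a12, a23, a31. Qed.

Lemma objective_100 (h1 h2 h3 P : R) :
  h2 ^+ 2 <= h1 ^+ 2 -> 0 <= P ->
  objective h1 h2 h3 P 1 0 0 =
    (2 * Num.min (Cp (h2 ^+ 2 * P - 2^-1)) (Cf (h2 ^+ 2 * P)))%:E.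
Proof.
move=> h12 P0.
rewrite /objective /term !addr0 !edivp1 !edivp0.
have -> : Order.min (h1 ^+ 2 * P)%:E (h2 ^+ 2 * P)%:E = (h2 ^+ 2 * P)%:E.
  by apply/min_idPr; rewrite lee_fin ler_wpM2r.
by rewrite !mulr0 !mul0e !adde0 mulr1 -EFinN -EFinD /= -EFin_min -EFinM.
Qed.

End Objective.

Theorem corollary4 (R : realType) (h1 h2 h3 P : R) :
  h2 ^+ 2 <= h1 ^+ 2 -> h3 ^+ 2 <= h2 ^+ 2 -> 0 < P ->
  ((2 * Num.min (Cp (h2 ^+ 2 * P - 2^-1)) (Cf (h2 ^+ 2 * P)))%:E
     <= underC3 h1 h2 h3 P)%E.
Proof.
move=> h12 _ P0.
rewrite -(objective_100 h1 h2 h3 P h12 (ltW P0)).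
by apply: objective_le_underC3; rewrite ?ler01 ?lexx // !addr0.
Qed.
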